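(* Let $(S^1,V^1)$ and $(S^2,V^2)$ be normal $\mathbb{Q}$-VASR abstractions of equal concrete dimension. Then the $\mathbb{Q}$-VASR abstraction $(S,V)$ computed by the join algorithm described in the context is normal and is a least upper bound of $(S^1,V^1)$ and $(S^2,V^2)$ with respect to $\preceq$.
   Context: A $\mathbb{Q}$-VASR of dimension $d$ is a finite set $V\subseteq\{0,1\}^d\times\mathbb{Q}^d$ of transformers $(\vec r,\vec a)$; $\vec u\to_V\vec v$ iff $\vec v=\vec r*\vec u+\vec a$ for some $(\vec r,\vec a)\in V$ ($*$ pointwise product). For transition systems on $\mathbb{Q}^n,\mathbb{Q}^m$, a linear simulation $A\Vdash_S B$ is $S\in\mathbb{Q}^{m\times n}$ with $\vec u\to_A\vec v\Rightarrow S\vec u\to_BS\vec v$. A $\mathbb{Q}$-VASR abstraction is a pair $(S,V)$ with $S\in\mathbb{Q}^{d\times n}$ and $V$ a $d$-dimensional $\mathbb{Q}$-VASR ($n$ = concrete dimension, $d$ = abstract dimension). Preorder: $(S^1,V^1)\preceq(S^2,V^2)$ (abstract dimensions $d,e$) iff there exists $T\in\mathbb{Q}^{e\times d}$ with $V^1\Vdash_TV^2$ and $TS^1=S^2$. An upper bound of two abstractions is an abstraction $\succeq$ both; a least upper bound is an upper bound $\preceq$ every upper bound. Coherence: dimensions $i,j$ of $V$ are coherent if $r_i=r_j$ for all $(\vec r,\vec a)\in V$; equivalence classes are coherence classes. For a coherence class $C=\{c_1<\dots<c_k\}$ of a $d$-dimensional $V$, $\pi_C$ is the $k\times d$ matrix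 with rows $\vec e_{c_1},\dots,\vec e_{c_k}$. A row vector or matrix is coherent w.r.t. $V$ if each row has nonzero entries only in columns of one coherence class. $(S,V)$ is normal if there is no nonzero row vector $\vec z$ coherent w.r.t. $V$ with $\vec zS=0$. For $T$ coherent w.r.t. $V$ with no zero rows, $\mathrm{image}(V,T)=\{(T\rhd\vec r,T\vec a):(\vec r,\vec a)\in V\}$, with $(T\rhd\vec r)_i=r_j$ for any $j$ with $T_{ij}\neq0$. For matrices $A,B$ with equal numbers of columns, $\mathit{pushout}(A,B)$ returns $(U^1,U^2)$ whose row pairs $(U^1_i,U^2_i)$ form a basis of the vector space $\{(\vec u^1,\vec u^2):\vec u^1A=\vec u^2B\}$. Join algorithm on input $(S^1,V^1),(S^2,V^2)$: start with empty matrices $S,T^1,T^2$. For each coherence class $C^1$ of $V^1$ and each coherence class $C^2$ of $V^2$: compute $(U^1,U^2)=\mathit{pushout}(\pi_{C^1}S^1,\pi_{C^2}S^2)$; append the rows of $U^1\pi_{C^1}S^1$ to $S$, the rows of $U^1\pi_{C^1}$ to $T^1$, and the rows of $U^2\pi_{C^2}$ to $T^2$. Then set $V=\mathrm{image}(V^1,T^1)\cup\mathrm{image}(V^2,T^2)$ and return $(S,V)$. *)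

From HB Require Import structures.
From mathcomp Require Import all_boot all_order all_algebra.
Set Implicit Arguments.
Unset Strict Implicit.
Unset Printing Implicit Defensive.
Import Order.TTheory GRing.Theory Num.Theory.
Local Open Scope ring_scope.

Definition transformer (d : nat) := ({ffun 'I_d -> bool} * 'cV[rat]_d)%type.
Definition qvasr (d : nat) := seq (transformer d).

Definition apply_tr d (t : transformer d) (u : 'cV[rat]_d) : 'cV[rat]_d :=
  \col_i (((t.1 i : nat)%:R) * u i 0) + t.2.

Definition vstep d (V : qvasr d) (u v : 'cV[rat]_d) : Prop :=
  exists2 t, t \in V & v = apply_tr t u.

Definition lin_sim n m (A : 'cV[rat]_n -> 'cV[rat]_n -> Prop)
  (B : 'cV[rat]_m -> 'cV[rat]_m -> Prop) (S : 'M[rat]_(m, n)) : Prop :=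
  forall u v, A u v -> B (S *m u) (S *m v).

Record abstraction (n : nat) := Abstraction {
  adim : nat;
  amat : 'M[rat]_(adim, n);
  avasr : qvasr adim }.

Definition abs_le n (A B : abstraction n) : Prop :=
  exists T : 'M[rat]_(adim B, adim A),
    lin_sim (vstep (avasr A)) (vstep (avasr B)) T /\ T *m amat A = amat B.

Definition is_ub n (A1 A2 B : abstraction n) : Prop := abs_le A1 B /\ abs_le A2 B.

Definition is_lub n (A1 A2 B : abstraction n) : Prop :=
  is_ub A1 A2 B /\ forall C : abstraction n, is_ub A1 A2 C -> abs_le B C.

Definition coherent d (V : qvasr d) (i j : 'I_d) : bool :=
  all (fun t : transformer d => t.1 i == t.1 j) V.

Definition coh_class d (V : qvasr d) (i : 'I_d) : {set 'I_d} :=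
  [set j | coherent V i j].

Definition coh_classes d (V : qvasr d) : {set {set 'I_d}} :=
  [set coh_class V i | i : 'I_d].

Definition coherent_row d (V : qvasr d) (z : 'rV[rat]_d) : Prop :=
  exists i : 'I_d, forall j : 'I_d, z 0 j != 0 -> coherent V i j.

Definition normal n (A : abstraction n) : Prop :=
  forall z : 'rV[rat]_(adim A), z != 0 -> coherent_row (avasr A) z ->
    z *m amat A != 0.

(* pi_C: rows e_{c_1}, ..., e_{c_k} with c_1 < ... < c_k. *)
Definition pi_mx d (C : {set 'I_d}) : 'M[rat]_(#|C|, d) :=
  \matrix_(i < #|C|, j < d) ((enum_val i == j)%:R).

Definition rhd k d (T : 'M[rat]_(k, d)) (r : {ffun 'I_d -> bool}) : {ffun 'I_k -> bool} :=
  [ffun i => if [pick j | T i j != 0] is Some j then r j else false].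

Definition vimage k d (V : qvasr d) (T : 'M[rat]_(k, d)) : qvasr k :=
  [seq (rhd T t.1, T *m t.2) | t <- V].

(* (U1, U2) is a valid output of pushout(A, B): the row pairs (U1_i, U2_i)
   form a basis of {(u1, u2) : u1 A = u2 B}. *)
Definition is_pushout k1 k2 n (A : 'M[rat]_(k1, n)) (B : 'M[rat]_(k2, n))
  p (U1 : 'M[rat]_(p, k1)) (U2 : 'M[rat]_(p, k2)) : Prop :=
  row_free (row_mx U1 U2) /\
  forall (u1 : 'rV[rat]_k1) (u2 : 'rV[rat]_k2),
    u1 *m A = u2 *m B <-> (row_mx u1 u2 <= row_mx U1 U2)%MS.

Definition join_pairs d1 d2 (V1 : qvasr d1) (V2 : qvasr d2) :
  seq ({set 'I_d1} * {set 'I_d2}) :=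
  [seq (C1, C2) | C1 <- enum (coh_classes V1), C2 <- enum (coh_classes V2)].

(* join_rows S1 S2 ps k S T1 T2: running the loop of the join algorithm over
   the list of class pairs ps (with any valid choice of pushout bases) yields
   the matrices S, T1, T2 (rows appended in processing order). *)
Inductive join_rows n d1 d2 (S1 : 'M[rat]_(d1, n)) (S2 : 'M[rat]_(d2, n)) :
  seq ({set 'I_d1} * {set 'I_d2}) ->
  forall k, 'M[rat]_(k, n) -> 'M[rat]_(k, d1) -> 'M[rat]_(k, d2) -> Prop :=
| join_nil : join_rows S1 S2 [::] (0 : 'M[rat]_(0, n)) (0 : 'M[rat]_(0, d1)) (0 : 'M[rat]_(0, d2))
| join_cons (C1 : {set 'I_d1}) (C2 : {set 'I_d2}) ps k
    (S : 'M[rat]_(k, n)) (T1 : 'M[rat]_(k, d1)) (T2 : 'M[rat]_(k, d2))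
    p (U1 : 'M[rat]_(p, #|C1|)) (U2 : 'M[rat]_(p, #|C2|)) :
    is_pushout (pi_mx C1 *m S1) (pi_mx C2 *m S2) U1 U2 ->
    join_rows S1 S2 ps S T1 T2 ->
    join_rows S1 S2 ((C1, C2) :: ps)
      (col_mx (U1 *m pi_mx C1 *m S1) S)
      (col_mx (U1 *m pi_mx C1) T1)
      (col_mx (U2 *m pi_mx C2) T2).

From HB Require Import structures.
From mathcomp Require Import all_boot all_order all_algebra.
From mathcomp Require Import lra.
Import Order.TTheory GRing.Theory Num.Theory.
Set Implicit Arguments.
Unset Strict Implicit.
Unset Printing Implicit Defensive.
Local Open Scope ring_scope.

(* The join is built with one block of rows per pair (C1, C2) of coherence
   classes, and each block is a pushout: its rows span exactly the pairs
   (u1, u2) of rows supported in C1 and C2 with u1 S1 = u2 S2.  Normality of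
   the inputs makes distinct blocks independent, so a vector supported in one
   block and killed by S is zero; since coherent dimensions of the joined
   Q-VASR lie in a common block, the join is normal.
   For minimality, a linear simulation T' of a Q-VASR V is coherent w.r.t. V:
   Q^d is not a finite union of proper affine subspaces, so each transformer
   of V is simulated by a single transformer, which forces every row of T'
   into one coherence class.  Given an upper bound with simulations T'1, T'2,
   each pair (row l T'1, row l T'2) then solves one of the pushout problems
   and factors through the join; the factors form the required simulation. *)

Definition supp_in d (w : 'rV[rat]_d) (C : {set 'I_d}) : Prop :=
  forall j, w 0 j != 0 -> j \in C.

Definition supp_inj n d (S : 'M[rat]_(d, n)) (C : {set 'I_d}) : Prop :=
  forall w, supp_in w C -> w *m S = 0 -> w = 0.

Lemma supp_in0 d (w : 'rV[rat]_d) : supp_in w set0 -> w = 0.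
Proof.
move=> Hw; apply/rowP => j; rewrite mxE; apply/eqP.
by apply: contraT => /Hw; rewrite inE.
Qed.

Lemma mul_pi_mx_supp p d (C : {set 'I_d}) (U : 'M[rat]_(p, #|C|)) i j :
  (U *m pi_mx C) i j != 0 -> j \in C.
Proof.
apply: contraR => jC; rewrite mxE big1 // => l _; rewrite mxE.
have -> : (enum_val l == j) = false.
  by apply/negbTE; apply: contraNneq jC => <-; exact: enum_valP.
by rewrite mulr0.
Qed.

Lemma mul_pi_mx_enum_val d (C : {set 'I_d}) (u : 'rV[rat]_#|C|) l :
  (u *m pi_mx C) 0 (enum_val l) = u 0 l.
Proof.
rewrite mxE (bigD1 l) //= big1 ?addr0; first by rewrite mxE eqxx mulr1.
move=> m ml; rewrite mxE.
have -> : (enum_val m == enum_val l) = false.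
  by apply/negbTE; apply: contra ml => /eqP/enum_val_inj ->.
by rewrite mulr0.
Qed.

Lemma pi_mx_inj d (C : {set 'I_d}) (u : 'rV[rat]_#|C|) : u *m pi_mx C = 0 -> u = 0.
Proof.
by move=> uC; apply/rowP => l; rewrite -mul_pi_mx_enum_val uC !mxE.
Qed.

Lemma supp_in_pi_mxK d (C : {set 'I_d}) (w : 'rV[rat]_d) :
  supp_in w C -> w = w *m (pi_mx C)^T *m pi_mx C.
Proof.
move=> Hw; apply/rowP => j; case: (boolP (j \in C)) => jC.
  rewrite -{2}(enum_rankK_in jC jC) mul_pi_mx_enum_val mxE.
  rewrite (bigD1 j) //= big1 ?addr0; first by rewrite !mxE enum_rankK_in // eqxx mulr1.
  by move=> m mj; rewrite !mxE enum_rankK_in // eq_sym (negbTE mj) mulr0.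
have -> : w 0 j = 0 by apply/eqP; apply: contraR jC => /Hw.
by symmetry; apply/eqP; apply: contraR jC; exact: mul_pi_mx_supp.
Qed.

Lemma coherentP d (V : qvasr d) i j :
  reflect (forall t, t \in V -> t.1 i = t.1 j) (coherent V i j).
Proof. by apply: (iffP allP) => H t /H => [/eqP|->]. Qed.

Lemma coherent_sym d (V : qvasr d) i j : coherent V i j -> coherent V j i.
Proof. by move/coherentP=> H; apply/coherentP => t /H ->. Qed.

Lemma coherent_trans d (V : qvasr d) i j l :
  coherent V i j -> coherent V j l -> coherent V i l.
Proof.
by move/coherentP=> H1 /coherentP H2; apply/coherentP => t tV; rewrite H1 // H2.
Qed.

Lemma coherent_cat d (V W : qvasr d) i j :
  coherent (V ++ W) i j = coherent V i j && coherent W i j.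
Proof. exact: all_cat. Qed.

Lemma coh_class_mem d (V : qvasr d) i : coh_class V i \in coh_classes V.
Proof. exact: imset_f. Qed.

Lemma coh_classE d (V : qvasr d) C p :
  C \in coh_classes V -> p \in C -> C = coh_class V p.
Proof.
case/imsetP => i _ ->; rewrite inE => ip.
apply/setP => j; rewrite !inE; apply/idP/idP => [ij | pj].
  exact: coherent_trans (coherent_sym ip) ij.
exact: coherent_trans ip pj.
Qed.

Definition coherent_mx d k (V : qvasr d) (T : 'M[rat]_(k, d)) : Prop :=
  forall i j j', T i j != 0 -> T i j' != 0 -> coherent V j j'.

Lemma coherent_mx_classes d k (V : qvasr d) (T : 'M[rat]_(k, d))
    (C : 'I_k -> {set 'I_d}) :
  (forall i, C i \in coh_classes V) -> (forall i j, T i j != 0 -> j \in C i) ->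
  coherent_mx V T.
Proof.
move=> HC supp i j j' h h'.
by have := supp _ _ h'; rewrite (coh_classE (HC i) (supp _ _ h)) inE.
Qed.

Lemma normal_row_inj n (A : abstraction n) (w : 'rV[rat]_(adim A)) :
  normal A -> coherent_mx (avasr A) w -> w *m amat A = 0 -> w = 0.
Proof.
move=> NA cw wA; have [j wj | w0] := pickP (fun j => w 0 j != 0); last first.
  by apply: supp_in0 => j; rewrite w0.
apply/eqP; apply: contraLR (introT eqP wA) => wn0.
by apply: NA wn0 _; exists j => j'; exact: cw.
Qed.

Lemma normal_supp_inj n (A : abstraction n) C :
  normal A -> C \in coh_classes (avasr A) -> supp_inj (amat A) C.
Proof.
move=> NA /imsetP [i _ ->] w supp; apply: normal_row_inj => // l j j'.
rewrite (ord1 l) => /supp + /supp; rewrite !inE => ij ij'.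
exact: coherent_trans (coherent_sym ij) ij'.
Qed.

Definition tr_diag d (r : {ffun 'I_d -> bool}) : 'M[rat]_d :=
  diag_mx (\row_i (r i : nat)%:R).

Lemma apply_trE d (t : transformer d) u : apply_tr t u = tr_diag t.1 *m u + t.2.
Proof.
rewrite /apply_tr /tr_diag mul_diag_mx; congr (_ + _).
by apply/matrixP => i j; rewrite !mxE (ord1 j).
Qed.

Definition sim_tr d e (T : 'M[rat]_(e, d)) (t : transformer d) (t' : transformer e) :=
  forall u, T *m apply_tr t u = apply_tr t' (T *m u).

Lemma sim_trP d e (T : 'M[rat]_(e, d)) t t' :
  sim_tr T t t' <-> (forall l i, T l i != 0 -> t.1 i = t'.1 l) /\ T *m t.2 = t'.2.
Proof.
split=> [Tt | [Tr Ta] u].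
  have Ta : T *m t.2 = t'.2 by have := Tt 0; rewrite !apply_trE !mulmx0 !add0r.
  split=> // l i Tli; have := Tt (delta_mx i 0).
  rewrite !apply_trE mulmxDr Ta => /addIr /matrixP /(_ l 0).
  rewrite mulmxA -!colE /tr_diag mul_mx_diag mul_diag_mx !mxE => E.
  move: Tli; apply: contraNeq => ne; move: E.
  case: (t.1 i) (t'.1 l) ne => [] [] //= _; first by rewrite mulr1 mul0r => ->.
  by rewrite mulr0 mul1r => <-.
rewrite !apply_trE mulmxDr Ta !mulmxA; congr (_ *m _ + _).
apply/matrixP => l i; rewrite /tr_diag mul_mx_diag mul_diag_mx !mxE.
have [->|Tli] := eqVneq (T l i) 0; first by rewrite mul0r mulr0.
by rewrite (Tr _ _ Tli) mulrC.
Qed.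

Lemma affine_neq0 e d (M : 'M[rat]_(e, d)) (b : 'cV[rat]_e) :
  (M != 0) || (b != 0) -> exists x, M *m x + b != 0.
Proof.
have [b0 | bn0] := eqVneq b 0; last by exists 0; rewrite mulmx0 add0r.
rewrite b0 orbF => Mn0.
have /existsP [j Mj] : [exists j, col j M != 0].
  apply: contraR Mn0 => /existsPn Mc; apply/eqP/matrixP => i j.
  by have /negbNE/eqP/matrixP/(_ i 0) := Mc j; rewrite !mxE.
by exists (delta_mx j 0); rewrite addr0 -colE.
Qed.

Lemma affine_eq0P e d (M : 'M[rat]_(e, d)) (b : 'cV[rat]_e) :
  reflect (forall x, M *m x + b = 0) ((M == 0) && (b == 0)).
Proof.
apply: (iffP andP) => [[/eqP-> /eqP->] x | Mb0]; first by rewrite mul0mx addr0.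
apply/andP; apply: contraT; rewrite negb_and => /affine_neq0 [x].
by rewrite Mb0 eqxx.
Qed.

Lemma exists_gt_seq (L : seq rat) : exists l, forall v, v \in L -> v < l.
Proof.
elim: L => [|a L [l Hl]]; first by exists 0.
exists (`|l| + `|a| + 1) => v; rewrite inE.
have := ler_norm a; have := ler_norm l; have := normr_ge0 a; have := normr_ge0 l.
by move=> ? ? ? ? /orP [/eqP -> | /Hl]; lra.
Qed.

Definition line_root e (p q : 'cV[rat]_e) : rat :=
  if [pick j | q j 0 != 0] is Some j then - p j 0 / q j 0 else 0.

Lemma line_rootP e (p q : 'cV[rat]_e) (l0 l : rat) :
  p + l0 *: q != 0 -> p + l *: q = 0 -> l = line_root p q.
Proof.
move=> pq0 pq; rewrite /line_root; case: pickP => [j qj | q0].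
  have /matrixP /(_ j 0) := pq; rewrite !mxE => E.
  by apply: (mulIf qj); rewrite divfK //; lra.
suff q_eq0 : q = 0.
  by rewrite q_eq0 !scaler0 !addr0 in pq0 pq; rewrite pq eqxx in pq0.
by apply/matrixP => i j; rewrite (ord1 j) mxE; apply/eqP/negbFE/q0.
Qed.

Lemma affine_avoid d e (I : eqType) (s : seq I)
    (M : I -> 'M[rat]_(e, d)) (b : I -> 'cV[rat]_e) :
  (forall c, c \in s -> exists x, M c *m x + b c != 0) ->
  exists x, forall c, c \in s -> M c *m x + b c != 0.
Proof.
elim: s => [|c s IH] Hs; first by exists 0.
have [x Hx] := IH (fun c' sc' => Hs c' (mem_behead (s := c :: s) sc')).
have [y Hy] := Hs c (mem_head _ _).
(* On the line through x and y, each map vanishes at most once (it is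
   nonzero at x or at y), so a point beyond all these roots works. *)
pose p c' := M c' *m x + b c'; pose q c' := M c' *m (y - x).
have line c' l : M c' *m (x + l *: (y - x)) + b c' = p c' + l *: q c'.
  by rewrite /p /q mulmxDr -scalemxAr addrAC.
have [l Hl] := exists_gt_seq [seq line_root (p c') (q c') | c' <- c :: s].
exists (x + l *: (y - x)) => c' sc'; rewrite line; apply/eqP => root_l.
have [l0 l0_nroot] : exists l0, p c' + l0 *: q c' != 0.
  move: sc'; rewrite inE => /orP [/eqP -> | sc'].
    by exists 1; rewrite -line scale1r [x + _]addrC subrK.
  by exists 0; rewrite scale0r addr0; exact: Hx.
have := Hl _ (map_f (fun c' => line_root (p c') (q c')) sc').
by rewrite -(line_rootP l0_nroot root_l) ltxx.
Qed.

Lemma affine_cover d e (I : eqType) (s : seq I)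
    (M : I -> 'M[rat]_(e, d)) (b : I -> 'cV[rat]_e) :
  (forall x, exists2 c, c \in s & M c *m x + b c = 0) ->
  exists2 c, c \in s & forall x, M c *m x + b c = 0.
Proof.
move=> cover.
have [/hasP [c sc /affine_eq0P] | /hasPn proper] :=
  boolP (has (fun c => (M c == 0) && (b c == 0)) s); first by exists c.
have [|x Hx] := @affine_avoid d e I s M b.
  by move=> c /proper; rewrite negb_and; exact: affine_neq0.
by have [c sc /eqP] := cover x; rewrite (negbTE (Hx c sc)).
Qed.

Lemma lin_simP d e (V : qvasr d) (W : qvasr e) (T : 'M[rat]_(e, d)) :
  lin_sim (vstep V) (vstep W) T <->
  forall t, t \in V -> exists2 t', t' \in W & sim_tr T t t'.
Proof.
split=> [sim t tV | simV u v [t tV ->]]; last first.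
  by have [t' t'W Tt] := simV t tV; exists t'; rewrite ?Tt.
pose M (t' : transformer e) := T *m tr_diag t.1 - tr_diag t'.1 *m T.
pose b (t' : transformer e) := T *m t.2 - t'.2.
have E t' x : T *m apply_tr t x - apply_tr t' (T *m x) = M t' *m x + b t'.
  by rewrite !apply_trE /M /b mulmxDr mulmxBl !mulmxA opprD addrACA.
have [|t' t'W Tt] := @affine_cover d e _ W M b.
  move=> x; have [|t' t'W Tt] := sim x (apply_tr t x); first by exists t.
  by exists t' => //; rewrite -E Tt subrr.
by exists t' => // x; apply/eqP; rewrite -subr_eq0 E Tt.
Qed.

Lemma lin_sim_cat d e (V W : qvasr d) (X : qvasr e) (T : 'M[rat]_(e, d)) :
  lin_sim (vstep V) (vstep X) T -> lin_sim (vstep W) (vstep X) T ->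
  lin_sim (vstep (V ++ W)) (vstep X) T.
Proof.
move=> simV simW u v [t]; rewrite mem_cat => /orP [] tVW ->.
  by apply: simV; exists t.
by apply: simW; exists t.
Qed.

Lemma lin_sim_coherent_mx d e (V : qvasr d) (W : qvasr e) (T : 'M[rat]_(e, d)) :
  lin_sim (vstep V) (vstep W) T -> coherent_mx V T.
Proof.
move=> /lin_simP sim l j j' Tj Tj'; apply/coherentP => t tV.
by have [t' _ /sim_trP [Tr _]] := sim t tV; rewrite (Tr _ _ Tj) (Tr _ _ Tj').
Qed.

Lemma rhd_coherent d k (V : qvasr d) (T : 'M[rat]_(k, d)) t i p :
  coherent_mx V T -> t \in V -> T i p != 0 -> rhd T t.1 i = t.1 p.
Proof.
move=> cT tV Tp; rewrite ffunE; case: pickP => [q /= Tq | T0].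
  by have /coherentP -> := cT _ _ _ Tq Tp.
by have := T0 p; rewrite /= Tp.
Qed.

Lemma sim_tr_vimage d k (V : qvasr d) (T : 'M[rat]_(k, d)) t :
  coherent_mx V T -> t \in V -> sim_tr T t (rhd T t.1, T *m t.2).
Proof.
by move=> cT tV; apply/sim_trP; split=> // l i Ti; rewrite (rhd_coherent cT tV Ti).
Qed.

Lemma lin_sim_vimage d k (V : qvasr d) (W : qvasr k) (T : 'M[rat]_(k, d)) :
  coherent_mx V T -> {subset vimage V T <= W} -> lin_sim (vstep V) (vstep W) T.
Proof.
move=> cT VTW; apply/lin_simP => t tV; exists (rhd T t.1, T *m t.2).
  by apply: VTW; exact: (map_f (fun t => (rhd T t.1, T *m t.2))).
exact: sim_tr_vimage cT tV.
Qed.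

Lemma coherent_vimage d k (V : qvasr d) (T : 'M[rat]_(k, d)) a b p q :
  coherent_mx V T -> coherent (vimage V T) a b ->
  T a p != 0 -> T b q != 0 -> coherent V p q.
Proof.
move=> cT /coherentP cab Tp Tq; apply/coherentP => t tV.
have := cab _ (map_f (fun t => (rhd T t.1, T *m t.2)) tV).
by rewrite /= (rhd_coherent cT tV Tp) (rhd_coherent cT tV Tq).
Qed.

Lemma vimage_coherent_class d k (V : qvasr d) (T : 'M[rat]_(k, d))
    (C : 'I_k -> {set 'I_d}) a b :
  (forall i, C i \in coh_classes V) -> (forall i j, T i j != 0 -> j \in C i) ->
  (forall i, exists p, T i p != 0) ->
  coherent (vimage V T) a b -> C a = C b.
Proof.
move=> HC supp nz cab; have [p Tp] := nz a; have [q Tq] := nz b.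
rewrite (coh_classE (HC a) (supp _ _ Tp)) (coh_classE (HC b) (supp _ _ Tq)).
apply: coh_classE; first exact: coh_class_mem.
by rewrite inE; exact: coherent_vimage (coherent_mx_classes HC supp) cab Tp Tq.
Qed.

Lemma lin_sim_vimage_factor d e k (V : qvasr d) (W : qvasr e)
    (T1 : 'M[rat]_(k, d)) (T' : 'M[rat]_(e, d)) (T : 'M[rat]_(e, k))
    (C : 'I_k -> {set 'I_d}) :
  coherent_mx V T1 -> (forall i, exists p, T1 i p != 0) ->
  (forall i p, T1 i p != 0 -> p \in C i) ->
  (forall l i, T l i != 0 -> exists2 j, T' l j != 0 & C i = coh_class V j) ->
  T *m T1 = T' -> lin_sim (vstep V) (vstep W) T' ->
  lin_sim (vstep (vimage V T1)) (vstep W) T.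
Proof.
move=> cT1 nz supp link TT1 /lin_simP sim; apply/lin_simP => _ /mapP [t tV ->].
have [t' t'W /sim_trP [Tr Ta]] := sim t tV.
exists t' => //; apply/sim_trP; split; last by rewrite mulmxA TT1.
move=> l i /link [j Tj Ci] /=; have [p Tp] := nz i.
rewrite (rhd_coherent cT1 tV Tp) -(Tr _ _ Tj).
by have := supp _ _ Tp; rewrite Ci inE => /coherentP/(_ t tV) ->.
Qed.

Section Pushout.
Variables (k1 k2 n p : nat) (A : 'M[rat]_(k1, n)) (B : 'M[rat]_(k2, n)).
Variables (U1 : 'M[rat]_(p, k1)) (U2 : 'M[rat]_(p, k2)).
Hypothesis po : is_pushout A B U1 U2.

Lemma pushout_eq : U1 *m A = U2 *m B.
Proof.
have [_ poP] := po; apply/row_matrixP => i; rewrite !row_mul; apply/poP.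
by rewrite -row_row_mx; exact: row_sub.
Qed.

Lemma pushout_factor (u1 : 'rV[rat]_k1) (u2 : 'rV[rat]_k2) :
  u1 *m A = u2 *m B -> exists D, u1 = D *m U1 /\ u2 = D *m U2.
Proof.
have [_ poP] := po; move=> /poP /submxP [D].
by rewrite mul_mx_row => /eq_row_mx; exists D.
Qed.

Lemma pushout_inj m (D : 'M[rat]_(m, p)) : D *m U1 = 0 -> D *m U2 = 0 -> D = 0.
Proof.
have [free _] := po; move=> DU1 DU2; apply: (row_free_inj free).
by rewrite /= mul_mx_row DU1 DU2 mul0mx row_mx0.
Qed.

End Pushout.

Section JoinSpec.
Variables (n d1 d2 : nat) (S1 : 'M[rat]_(d1, n)) (S2 : 'M[rat]_(d2, n)).
Local Notation class_pair := ({set 'I_d1} * {set 'I_d2})%type.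

Definition block_supp k (blk : 'I_k -> class_pair) P (c : 'rV[rat]_k) : Prop :=
  forall i, c 0 i != 0 -> blk i = P.

(* [blk i] is the pair of coherence classes whose pushout produced row [i]. *)
Record join_spec (ps : seq class_pair) k (S : 'M[rat]_(k, n))
    (T1 : 'M[rat]_(k, d1)) (T2 : 'M[rat]_(k, d2)) (blk : 'I_k -> class_pair) :
    Prop := JoinSpec {
  join_T1E : T1 *m S1 = S;
  join_T2E : T2 *m S2 = S;
  join_blk_mem : forall i, blk i \in ps;
  join_T1_supp : forall i j, T1 i j != 0 -> j \in (blk i).1;
  join_T2_supp : forall i j, T2 i j != 0 -> j \in (blk i).2;
  join_factor_block : forall P w1 w2, P \in ps ->
    supp_in w1 P.1 -> supp_in w2 P.2 -> w1 *m S1 = w2 *m S2 ->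
    exists2 c, block_supp blk P c & c *m T1 = w1 /\ c *m T2 = w2;
  join_block_inj : forall P c, block_supp blk P c -> c *m S = 0 -> c = 0 }.

Lemma join_spec_nil :
  join_spec [::] (0 : 'M_(0, n)) (0 : 'M_(0, d1)) 0 (fun=> (set0, set0)).
Proof.
split; rewrite ?mul0mx //; [by case | by case | by case |].
by move=> P c _ _; apply/rowP => -[].
Qed.

Section JoinCons.
Variables (C1 : {set 'I_d1}) (C2 : {set 'I_d2}) (ps : seq class_pair) (k : nat).
Variables (S : 'M[rat]_(k, n)) (T1 : 'M[rat]_(k, d1)) (T2 : 'M[rat]_(k, d2)).
Variables (blk : 'I_k -> class_pair) (p : nat).
Variables (U1 : 'M[rat]_(p, #|C1|)) (U2 : 'M[rat]_(p, #|C2|)).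
Hypothesis po : is_pushout (pi_mx C1 *m S1) (pi_mx C2 *m S2) U1 U2.
Hypothesis spec : join_spec ps S T1 T2 blk.
Hypothesis fresh : (C1, C2) \notin ps.
Hypotheses (inj1 : supp_inj S1 C1) (inj2 : supp_inj S2 C2).

Definition cons_blk (i : 'I_(p + k)) : class_pair :=
  if split i is inr j then blk j else (C1, C2).

Lemma cons_blk_lshift a : cons_blk (lshift k a) = (C1, C2).
Proof. by rewrite /cons_blk (unsplitK (inl a) : split (lshift k a) = inl a). Qed.

Lemma cons_blk_rshift a : cons_blk (rshift p a) = blk a.
Proof. by rewrite /cons_blk (unsplitK (inr a) : split (rshift p a) = inr a). Qed.

Lemma block_supp_row_mx P (c1 : 'rV[rat]_p) (c2 : 'rV[rat]_k) :
  block_supp cons_blk P (row_mx c1 c2) <->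
  (forall a, c1 0 a != 0 -> (C1, C2) = P) /\ block_supp blk P c2.
Proof.
split=> [Hc | [H1 H2] i]; first split=> a ca.
- by rewrite -(cons_blk_lshift a); apply: Hc; rewrite row_mxEl.
- by rewrite -(cons_blk_rshift a); apply: Hc; rewrite row_mxEr.
rewrite -(splitK i); case: (split i) => a /=.
  by rewrite row_mxEl cons_blk_lshift; exact: H1.
by rewrite row_mxEr cons_blk_rshift; exact: H2.
Qed.

Lemma join_cons_factor P w1 w2 :
  P \in (C1, C2) :: ps -> supp_in w1 P.1 -> supp_in w2 P.2 ->
  w1 *m S1 = w2 *m S2 ->
  exists2 c, block_supp cons_blk P c &
    c *m col_mx (U1 *m pi_mx C1) T1 = w1 /\ c *m col_mx (U2 *m pi_mx C2) T2 = w2.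
Proof.
rewrite inE => /orP [/eqP -> | Pps] s1 s2 w12; last first.
  have [c Pc [cT1 cT2]] := join_factor_block spec Pps s1 s2 w12.
  exists (row_mx 0 c); first by apply/block_supp_row_mx; split=> // a; rewrite mxE eqxx.
  by rewrite !mul_row_col !mul0mx !add0r.
have [|D [E1 E2]] :=
  pushout_factor po (u1 := w1 *m (pi_mx C1)^T) (u2 := w2 *m (pi_mx C2)^T).
  by rewrite !mulmxA -(supp_in_pi_mxK s1) -(supp_in_pi_mxK s2).
exists (row_mx D 0); first by apply/block_supp_row_mx; split=> // a; rewrite mxE eqxx.
by rewrite !mul_row_col !mul0mx !addr0 !mulmxA -E1 -E2 -!supp_in_pi_mxK.
Qed.

Lemma join_cons_block_inj P c :
  block_supp cons_blk P c -> c *m col_mx (U1 *m pi_mx C1 *m S1) S = 0 -> c = 0.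
Proof.
rewrite -(hsubmxK c) mul_row_col => /block_supp_row_mx [Hl Hr] cS.
have [PC | PnC] := eqVneq P (C1, C2); last first.
  have cl0 : lsubmx c = 0.
    by apply: supp_in0 => a /Hl /esym /eqP; rewrite (negbTE PnC).
  rewrite cl0 mul0mx add0r in cS.
  by rewrite cl0 (join_block_inj spec Hr cS) row_mx0.
have cr0 : rsubmx c = 0.
  apply: supp_in0 => i /Hr; rewrite PC => blk_i.
  by case/negP: fresh; rewrite -blk_i (join_blk_mem spec).
rewrite cr0 mul0mx addr0 !mulmxA in cS.
have cU1 : lsubmx c *m U1 = 0.
  by apply: pi_mx_inj; apply: inj1 => //; exact: mul_pi_mx_supp.
have cU2 : lsubmx c *m U2 = 0.
  apply: pi_mx_inj; apply: inj2; first exact: mul_pi_mx_supp.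
  by rewrite -!mulmxA -(pushout_eq po) !mulmxA.
by rewrite (pushout_inj po cU1 cU2) cr0 row_mx0.
Qed.

Lemma join_spec_cons :
  join_spec ((C1, C2) :: ps) (col_mx (U1 *m pi_mx C1 *m S1) S)
    (col_mx (U1 *m pi_mx C1) T1) (col_mx (U2 *m pi_mx C2) T2) cons_blk.
Proof.
have [T1E T2E blk_ps T1_supp T2_supp _ _] := spec.
split.
- by rewrite mul_col_mx T1E.
- by rewrite mul_col_mx T2E -!mulmxA (pushout_eq po).
- move=> i; rewrite -(splitK i); case: (split i) => a /=.
    by rewrite cons_blk_lshift mem_head.
  by rewrite cons_blk_rshift inE blk_ps orbT.
- move=> i j; rewrite -(splitK i); case: (split i) => a /=.
    by rewrite cons_blk_lshift col_mxEu; exact: mul_pi_mx_supp.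
  by rewrite cons_blk_rshift col_mxEd; exact: T1_supp.
- move=> i j; rewrite -(splitK i); case: (split i) => a /=.
    by rewrite cons_blk_lshift col_mxEu; exact: mul_pi_mx_supp.
  by rewrite cons_blk_rshift col_mxEd; exact: T2_supp.
- exact: join_cons_factor.
- exact: join_cons_block_inj.
Qed.

End JoinCons.

Lemma join_rows_spec ps k (S : 'M[rat]_(k, n)) T1 T2 :
  join_rows S1 S2 ps S T1 T2 -> uniq ps ->
  (forall P, P \in ps -> supp_inj S1 P.1 /\ supp_inj S2 P.2) ->
  exists blk, join_spec ps S T1 T2 blk.
Proof.
elim=> [|C1 C2 {}ps {}k {}S {}T1 {}T2 p U1 U2 po _ IH] /=.
  by exists (fun=> (set0, set0)); exact: join_spec_nil.
case/andP=> fresh uniq_ps inj.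
have [blk spec] : exists blk, join_spec ps S T1 T2 blk.
  by apply: IH => // P Pps; apply: inj; rewrite inE Pps orbT.
have [inj1 inj2] := inj _ (mem_head _ _).
by eexists; exact: (join_spec_cons po spec fresh inj1 inj2).
Qed.

End JoinSpec.

Lemma join_pairs_uniq d1 d2 (V1 : qvasr d1) (V2 : qvasr d2) : uniq (join_pairs V1 V2).
Proof.
by apply: allpairs_uniq; rewrite ?enum_uniq // => -[? ?] [? ?] _ _ [-> ->].
Qed.

Lemma mem_join_pairs d1 d2 (V1 : qvasr d1) (V2 : qvasr d2) P :
  (P \in join_pairs V1 V2) = (P.1 \in coh_classes V1) && (P.2 \in coh_classes V2).
Proof.
apply/allpairsP/andP => [[[C1 C2] [/= C1V C2V ->]] | [P1 P2]].
  by rewrite !mem_enum in C1V C2V.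
by exists P; rewrite !mem_enum -surjective_pairing.
Qed.

Lemma matrix_of_rows m k (P : 'I_m -> 'rV[rat]_k -> Prop) :
  (forall l, exists c, P l c) -> exists T : 'M[rat]_(m, k), forall l, P l (row l T).
Proof.
move=> /fin_all_exists [c Pc]; exists (\matrix_(l, i) c l 0 i) => l.
by rewrite (_ : row l _ = c l) //; apply/rowP => i; rewrite !mxE.
Qed.

Section JoinAbstraction.
Variables (n d1 d2 : nat) (S1 : 'M[rat]_(d1, n)) (S2 : 'M[rat]_(d2, n)).
Variables (V1 : qvasr d1) (V2 : qvasr d2).
Hypotheses (N1 : normal (Abstraction S1 V1)) (N2 : normal (Abstraction S2 V2)).
Variables (k : nat) (S : 'M[rat]_(k, n)) (T1 : 'M[rat]_(k, d1)) (T2 : 'M[rat]_(k, d2)).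
Variable blk : 'I_k -> {set 'I_d1} * {set 'I_d2}.
Hypothesis spec : join_spec S1 S2 (join_pairs V1 V2) S T1 T2 blk.
Local Notation V := (vimage V1 T1 ++ vimage V2 T2).

Lemma join_blk_classes i :
  (blk i).1 \in coh_classes V1 /\ (blk i).2 \in coh_classes V2.
Proof. by apply/andP; rewrite -mem_join_pairs (join_blk_mem spec). Qed.

Lemma join_row_neq0 d (Ti : 'M[rat]_(k, d)) (Si : 'M[rat]_(d, n)) :
  Ti *m Si = S -> forall i, exists p, Ti i p != 0.
Proof.
move=> TSi i; have [p Tp | Ti0] := pickP (fun p => Ti i p != 0); first by exists p.
have : (delta_mx 0 i : 'rV[rat]_k) = 0.
  apply: (join_block_inj spec (P := blk i)) => [j | ].
    by rewrite mxE eqxx /=; have [-> // | _] := eqVneq j i; rewrite eqxx.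
  rewrite -rowE -TSi row_mul (_ : row i Ti = 0) ?mul0mx //.
  by apply/rowP => j; rewrite !mxE; apply/eqP/negbFE/Ti0.
by move/rowP/(_ i); rewrite !mxE !eqxx => /eqP; rewrite oner_eq0.
Qed.

Lemma join_T1_coherent : coherent_mx V1 T1.
Proof.
exact: coherent_mx_classes (fun i => (join_blk_classes i).1) (join_T1_supp spec).
Qed.

Lemma join_T2_coherent : coherent_mx V2 T2.
Proof.
exact: coherent_mx_classes (fun i => (join_blk_classes i).2) (join_T2_supp spec).
Qed.

Lemma join_coherent_blk a b : coherent V a b -> blk a = blk b.
Proof.
rewrite coherent_cat => /andP [c1 c2].
rewrite [blk a]surjective_pairing [blk b]surjective_pairing; congr (_, _).
  apply: (vimage_coherent_class (fun i => (join_blk_classes i).1)) c1.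
    exact: join_T1_supp spec.
  exact: join_row_neq0 (join_T1E spec).
apply: (vimage_coherent_class (fun i => (join_blk_classes i).2)) c2.
  exact: join_T2_supp spec.
exact: join_row_neq0 (join_T2E spec).
Qed.

Lemma join_normal : normal (Abstraction S V).
Proof.
move=> z /= zn0 [i zi]; apply: contra zn0 => /eqP zS; apply/eqP.
by apply: (join_block_inj spec (P := blk i)) zS => j /zi /join_coherent_blk.
Qed.

Lemma join_ub :
  abs_le (Abstraction S1 V1) (Abstraction S V) /\
  abs_le (Abstraction S2 V2) (Abstraction S V).
Proof.
split; [exists T1 | exists T2]; split; rewrite /= ?(join_T1E spec) ?(join_T2E spec) //.
  by apply: lin_sim_vimage join_T1_coherent _ => t ht; rewrite mem_cat ht.
by apply: lin_sim_vimage join_T2_coherent _ => t ht; rewrite mem_cat ht orbT.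
Qed.

Definition factors_via_join (w1 : 'rV[rat]_d1) (w2 : 'rV[rat]_d2)
    (c : 'rV[rat]_k) :=
  [/\ c *m T1 = w1, c *m T2 = w2 &
    forall i, c 0 i != 0 -> exists j1 j2,
      [/\ w1 0 j1 != 0, w2 0 j2 != 0 & blk i = (coh_class V1 j1, coh_class V2 j2)]].

Lemma join_factor_row (w1 : 'rV[rat]_d1) (w2 : 'rV[rat]_d2) :
  coherent_mx V1 w1 -> coherent_mx V2 w2 -> w1 *m S1 = w2 *m S2 ->
  exists c, factors_via_join w1 w2 c.
Proof.
move=> c1 c2 w12.
have [j1 w1j | w10] := pickP (fun j => w1 0 j != 0); last first.
  have w1_0 : w1 = 0 by apply: supp_in0 => j; rewrite w10.
  have w2_0 : w2 = 0.
    by apply: (normal_row_inj N2) => //=; rewrite -w12 w1_0 mul0mx.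
  by exists 0; rewrite /factors_via_join !mul0mx w1_0 w2_0; split=> // i; rewrite mxE eqxx.
have [j2 w2j | w20] := pickP (fun j => w2 0 j != 0); last first.
  have w2_0 : w2 = 0 by apply: supp_in0 => j; rewrite w20.
  have w1_0 : w1 = 0.
    by apply: (normal_row_inj N1) => //=; rewrite w12 w2_0 mul0mx.
  by move: w1j; rewrite w1_0 mxE eqxx.
have P_mem : (coh_class V1 j1, coh_class V2 j2) \in join_pairs V1 V2.
  by rewrite mem_join_pairs !coh_class_mem.
have [||c Pc [cT1 cT2]] := join_factor_block spec P_mem _ _ w12.
- by move=> j w1j'; rewrite inE; exact: c1 w1j w1j'.
- by move=> j w2j'; rewrite inE; exact: c2 w2j w2j'.
by exists c; split=> // i /Pc ->; exists j1, j2.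
Qed.

Lemma join_factor m (T'1 : 'M[rat]_(m, d1)) (T'2 : 'M[rat]_(m, d2)) :
  coherent_mx V1 T'1 -> coherent_mx V2 T'2 -> T'1 *m S1 = T'2 *m S2 ->
  exists T : 'M[rat]_(m, k), [/\ T *m T1 = T'1, T *m T2 = T'2 &
    forall l i, T l i != 0 -> exists j1 j2,
      [/\ T'1 l j1 != 0, T'2 l j2 != 0 & blk i = (coh_class V1 j1, coh_class V2 j2)]].
Proof.
move=> c1 c2 T12.
have [|T Trow] := matrix_of_rows (P := fun l => factors_via_join (row l T'1) (row l T'2)).
  move=> l; apply: join_factor_row; last by rewrite -!row_mul T12.
    by move=> ? j j'; rewrite !mxE; exact: c1.
  by move=> ? j j'; rewrite !mxE; exact: c2.
exists T; split; try by apply/row_matrixP => l; rewrite row_mul; case: (Trow l).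
move=> l i Tli; have [_ _ /(_ i)] := Trow l; rewrite !mxE => /(_ Tli).
by move=> [j1 [j2]]; rewrite !mxE; exists j1, j2.
Qed.

Lemma join_least B :
  abs_le (Abstraction S1 V1) B -> abs_le (Abstraction S2 V2) B ->
  abs_le (Abstraction S V) B.
Proof.
move=> [T'1 [sim1 T'1E]] [T'2 [sim2 T'2E]] /=.
have [|T [TT1 TT2 link]] := join_factor (lin_sim_coherent_mx sim1)
  (lin_sim_coherent_mx sim2); first by rewrite T'1E T'2E.
exists T; split; last by rewrite /= -(join_T1E spec) mulmxA TT1.
apply: lin_sim_cat.
  apply: (lin_sim_vimage_factor (C := fun i => (blk i).1)) TT1 sim1.
  - exact: join_T1_coherent.
  - exact: join_row_neq0 (join_T1E spec).
  - exact: join_T1_supp spec.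
  - by move=> l i /link [j1 [j2 [T'j1 _ ->]]]; exists j1.
apply: (lin_sim_vimage_factor (C := fun i => (blk i).2)) TT2 sim2.
- exact: join_T2_coherent.
- exact: join_row_neq0 (join_T2E spec).
- exact: join_T2_supp spec.
- by move=> l i /link [j1 [j2 [_ T'j2 ->]]]; exists j2.
Qed.

End JoinAbstraction.

Unset Implicit Arguments.
Set Strict Implicit.
Theorem proposition2 (n : nat) (A1 A2 : abstraction n) (k : nat)
  (S : 'M[rat]_(k, n)) (T1 : 'M[rat]_(k, adim A1)) (T2 : 'M[rat]_(k, adim A2)) :
  normal A1 -> normal A2 ->
  join_rows (amat A1) (amat A2) (join_pairs (avasr A1) (avasr A2)) S T1 T2 ->
  normal (Abstraction S (vimage (avasr A1) T1 ++ vimage (avasr A2) T2)) /\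
  is_lub A1 A2 (Abstraction S (vimage (avasr A1) T1 ++ vimage (avasr A2) T2)).
Proof.
case: A1 T1 => d1 S1 V1 T1; case: A2 T2 => d2 S2 V2 T2 /= N1 N2 join.
have [|blk spec] := join_rows_spec join (join_pairs_uniq V1 V2).
  move=> P; rewrite mem_join_pairs => /andP [P1 P2].
  by split; [exact: normal_supp_inj N1 P1 | exact: normal_supp_inj N2 P2].
split; first exact: join_normal spec.
split; first exact: join_ub spec.
by move=> B [ub1 ub2]; exact: (join_least N1 N2 spec ub1 ub2).
Qed.
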